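(* Let $\mathbf{G}$ be a labeled multilayer directed network on $\mathcal{V}=\{v_1,\dots,v_n\}$ with labels $\{C_1,\dots,C_h\}$ and attractiveness values $A_{i,l}$ such that for each $l$ the values $A_{1,l},\dots,A_{n,l}$ are pairwise distinct, and suppose $\mathbf{G}$ is extremal, i.e. $P(\mathbf{G})=\min_{\mathbf{H}\in\mathcal{R}(\mathbf{G})}P(\mathbf{H})$ or $P(\mathbf{G})=\max_{\mathbf{H}\in\mathcal{R}(\mathbf{G})}P(\mathbf{H})$. Let $E\subseteq\mathcal{E}$ be a nonempty edge set with $\Delta(E)=0$. Then there is no label $C_l$ with $C_l\in\mathcal{C}(e)$ for all $e\in E$ (i.e. the edges of $E$ do not share a common label). Equivalently, if all edges of $E$ share a common label, then $\Delta(E)=1$.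
   Context: A labeled multilayer directed network $\mathbf{G}=(\mathcal{V},\mathcal{E})$ is a finite simple directed graph (no self-loops, no multiple edges) on nodes $\mathcal{V}=\{v_1,\dots,v_n\}$ in which each edge $v_i\to v_j\in\mathcal{E}$ carries a nonempty label set $\mathcal{C}(i,j)\subseteq\{C_1,\dots,C_h\}$; an ordered pair $(v_i,v_j)$ is an edge iff $\mathcal{C}(i,j)\neq\emptyset$. The $l$-th layer $\mathbf{G}_l=(\mathcal{V}_l,\mathcal{E}_l)$ consists of all edges with $C_l\in\mathcal{C}(i,j)$ and their endpoints. Each node $v_i$ has, for each $l$, an attractiveness $A_{i,l}\ge 0$; let $A_{\max,l}=\max_i A_{i,l}$. The potential energy of $v_i$ in layer $l$ is $P_l(i)=\sum_{j=1}^n (A_{\max,l}-A_{j,l})\,\chi(v_i\to v_j\in\mathcal{E}_l)$, and $P(\mathbf{G})=\sum_{i=1}^n\sum_{l=1}^h P_l(i)$. A rewiring move replaces, for some layer $l$ and some edge $v_j\to v_k\in\mathcal{E}_l$, the layer-$l$ edge $v_j\to v_k$ by a layer-$l$ edge $v_j\to v_w$ with $w\neq j$ and $v_j\to v_w\notin\mathcal{E}_l$ (i.e. $C_l$ is removed from $\mathcal{C}(j,k)$ and added to $\mathcal{C}(j,w)$; the edge $v_j\to v_k$ disappears if its label set becomes empty, and $v_j\to v_w$ is created if it did not exist). $\mathcal{R}(\mathbf{G})$ is the set of all labeled multilayer networks (same nodes, same attractiveness values) obtainable from $\mathbf{G}$ by finite sequences of rewiring moves (including $\mathbf{G}$). For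 an edge set $F$, $\lceil F\rceil_{src}$ (resp. $\lceil F\rceil_{tar}$) is the set of source (resp. target) nodes of edges of $F$. A node $u$ is a $(2,\mathbf{G})$-follower of $v$ if the directed shortest-path distance from $u$ to $v$ in $\mathbf{G}$ (ignoring labels) equals exactly $2$. The removal procedure on $E$: set $F:=E$; while there exists a node $v\in\lceil F\rceil_{tar}$ having no $(2,\mathbf{G})$-follower in $\lceil F\rceil_{src}$, choose one such $v$ and remove from $F$ all edges of $F$ whose target is $v$; when no such node exists (or $F=\emptyset$), stop and set $\delta(E):=F$ (this is independent of the choices made). $\Delta(E)=1$ if $\delta(E)=\emptyset$, and $\Delta(E)=0$ otherwise. *)

From mathcomp Require Import all_boot all_order all_algebra.
From Stdlib Require Import Relations.
Set Implicit Arguments. Unset Strict Implicit. Unset Printing Implicit Defensive.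
Import Order.TTheory GRing.Theory Num.Theory.
Local Open Scope ring_scope.

(* A labeled multilayer directed network on nodes 'I_n with labels 'I_h:
   G i j is the label set C(i,j); (i,j) is an edge iff G i j != set0. *)
Definition net (n h : nat) := 'I_n -> 'I_n -> {set 'I_h}.

Definition no_self_loops n h (G : net n h) : Prop := forall i, G i i = set0.

Definition is_edge n h (G : net n h) (i j : 'I_n) : bool := G i j != set0.

Definition edges n h (G : net n h) : {set 'I_n * 'I_n} :=
  [set e | is_edge G e.1 e.2].

Definition rewire_step n h (G G' : net n h) : Prop :=
  exists (l : 'I_h) (j k w : 'I_n),
    [/\ l \in G j k, w != j, l \notin G j w &
     forall x y, G' x y =
       if (x == j) && (y == k) then G j k :\ l
       else if (x == j) && (y == w) then l |: G j w
       else G x y].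

Definition reachable n h (G H : net n h) : Prop :=
  clos_refl_trans (net n h) (@rewire_step n h) G H.

Definition Amax (R : realDomainType) n h (A : 'I_n -> 'I_h -> R) (l : 'I_h) : R :=
  \big[Num.max/0]_(i : 'I_n) A i l.

Definition Pl (R : realDomainType) n h (A : 'I_n -> 'I_h -> R) (G : net n h)
  (l : 'I_h) (i : 'I_n) : R :=
  \sum_(j : 'I_n) (Amax A l - A j l) *+ (l \in G i j).

Definition Ptot (R : realDomainType) n h (A : 'I_n -> 'I_h -> R) (G : net n h) : R :=
  \sum_(i : 'I_n) \sum_(l : 'I_h) Pl A G l i.

Definition extremal (R : realDomainType) n h (A : 'I_n -> 'I_h -> R) (G : net n h) : Prop :=
  (forall H, reachable G H -> Ptot A G <= Ptot A H) \/
  (forall H, reachable G H -> Ptot A H <= Ptot A G).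

Fixpoint walk_len n h (G : net n h) (k : nat) (u v : 'I_n) : bool :=
  match k with
  | 0 => u == v
  | k'.+1 => [exists w, is_edge G u w && walk_len G k' w v]
  end.

Definition dist_eq2 n h (G : net n h) (u v : 'I_n) : bool :=
  [&& walk_len G 2 u v, ~~ walk_len G 1 u v & ~~ walk_len G 0 u v].

Definition follower2 n h (G : net n h) (u v : 'I_n) : bool := dist_eq2 G u v.

Definition src n (F : {set 'I_n * 'I_n}) : {set 'I_n} := [set e.1 | e in F].
Definition tar n (F : {set 'I_n * 'I_n}) : {set 'I_n} := [set e.2 | e in F].

Definition removable n h (G : net n h) (F : {set 'I_n * 'I_n}) (v : 'I_n) : bool :=
  (v \in tar F) && [forall u in src F, ~~ follower2 G u v].

Definition removal_step n h (G : net n h) (F : {set 'I_n * 'I_n}) :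
  {set 'I_n * 'I_n} :=
  match [pick v | removable G F v] with
  | Some v => [set e in F | e.2 != v]
  | None => F
  end.

(* Each effective step removes at least one edge, so #|E| steps suffice
   to reach the terminal set. *)
Definition delta n h (G : net n h) (E : {set 'I_n * 'I_n}) : {set 'I_n * 'I_n} :=
  iter #|E| (removal_step G) E.

Definition Delta n h (G : net n h) (E : {set 'I_n * 'I_n}) : nat :=
  if delta G E == set0 then 1%N else 0%N.

From mathcomp Require Import all_boot all_order all_algebra.
From Stdlib Require Import Relations.
Set Implicit Arguments. Unset Strict Implicit. Unset Printing Implicit Defensive.
Import Order.TTheory GRing.Theory Num.Theory.
Local Open Scope ring_scope.

(* Fix a label l shared by all edges of E.  A single rewiring
   move j->k  ~>  j->w in layer l changes the potential P by exactly
   A(k,l) - A(w,l).  Hence if G is extremal, every admissible move in layer l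
   is monotone for the ranking B = A(.,l) (if P is minimal) or B = -A(.,l)
   (if P is maximal): B w <= B k.  Now take any nonempty F included in E and
   let v be the target of F with the largest rank.  If a source u of an edge
   u->x of F had distance exactly 2 to v, then u->v is not an edge, so moving
   u->x to u->v is admissible in layer l, whence B v <= B x <= B v, so x = v
   and u->v would be an edge after all.  Thus v is removable, every step of
   the removal procedure strictly shrinks a nonempty set, and #|E| steps
   empty E, i.e. Delta(E) = 1.
   The file proves: the potential change of one move, the monotone ranking
   of an extremal network, the removability of the top-ranked target, the
   termination of the removal procedure, and finally the theorem. *)

Section Potential.
Variables (R : realDomainType) (n h : nat) (A : 'I_n -> 'I_h -> R).

Definition rewired (G : net n h) (l : 'I_h) (j k w : 'I_n) : net n h :=
  fun x y =>
    if (x == j) && (y == k) then G j k :\ l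
    else if (x == j) && (y == w) then l |: G j w
    else G x y.

Lemma rewired_step (G : net n h) (l : 'I_h) (j k w : 'I_n) :
  l \in G j k -> w != j -> l \notin G j w -> rewire_step G (rewired G l j k w).
Proof. by move=> ljk wj ljw; exists l, j, k, w. Qed.

(* A rewiring move in layer l only changes the term P_l(j), and there it
   trades the contribution of target k for that of target w. *)
Lemma Ptot_rewired (G : net n h) (l : 'I_h) (j k w : 'I_n) :
  l \in G j k -> l \notin G j w ->
  Ptot A (rewired G l j k w) - Ptot A G = A k l - A w l.
Proof.
move=> ljk ljw.
have wk : w != k by apply: contraNneq ljw => ->.
rewrite /Ptot /Pl -sumrB (bigD1 j) //= [X in _ + X]big1 ?addr0; last first.
  move=> x xj; rewrite -sumrB big1 // => l' _; rewrite -sumrB big1 // => y _.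
  by rewrite /rewired (negbTE xj) subrr.
rewrite -sumrB (bigD1 l) //= [X in _ + X]big1 ?addr0; last first.
  move=> l' l'l; rewrite -sumrB big1 // => y _; rewrite /rewired eqxx /=.
  case: eqP => [->|_]; first by rewrite in_setD1 l'l subrr.
  case: eqP => [->|_]; last by rewrite subrr.
  by rewrite in_setU1 (negbTE l'l) subrr.
rewrite -sumrB (bigD1 k) //= (bigD1 w) //= [X in _ + (_ + X)]big1 ?addr0; last first.
  by move=> y /andP[yk yw]; rewrite /rewired eqxx (negbTE yk) (negbTE yw) subrr.
rewrite /rewired !eqxx /= (negbTE wk) in_setD1 eqxx in_setU1 eqxx /=.
rewrite ljk (negbTE ljw) /= !mulr0n !mulr1n add0r subr0.
by rewrite opprB addrA subrK.
Qed.

Definition rewiring_monotone (G : net n h) (l : 'I_h) (B : 'I_n -> R) : Prop :=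
  forall j k w, l \in G j k -> w != j -> l \notin G j w -> B w <= B k.

(* An extremal network admits, in each layer with pairwise distinct
   attractiveness, an injective monotone ranking: +A(.,l) or -A(.,l). *)
Lemma extremal_monotone_rank (G : net n h) (l : 'I_h) :
  extremal A G -> injective (fun i => A i l) ->
  exists B : 'I_n -> R, injective B /\ rewiring_monotone G l B.
Proof.
move=> ext injA.
have move_gain j k w : l \in G j k -> w != j -> l \notin G j w ->
    exists2 H, reachable G H & Ptot A H - Ptot A G = A k l - A w l.
  move=> ljk wj ljw; exists (rewired G l j k w); last exact: Ptot_rewired.
  exact/rt_step/rewired_step.
case: ext => [Pmin|Pmax].
  exists (fun i => A i l); split=> // j k w ljk wj ljw.
  have [H /Pmin PGH dP] := move_gain j k w ljk wj ljw.
  by rewrite -subr_ge0 -dP subr_ge0.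
exists (fun i => - A i l); split; first by move=> x y /oppr_inj /injA.
move=> j k w ljk wj ljw; have [H /Pmax PHG dP] := move_gain j k w ljk wj ljw.
by rewrite lerN2 -subr_le0 -dP subr_le0.
Qed.

(* In a nonempty edge set whose edges all carry label l, the target of
   maximal rank under an injective monotone ranking is removable. *)
Lemma top_target_removable (G : net n h) (l : 'I_h) (B : 'I_n -> R)
    (F : {set 'I_n * 'I_n}) :
  injective B -> rewiring_monotone G l B ->
  (forall e, e \in F -> l \in G e.1 e.2) -> F != set0 ->
  exists v, removable G F v.
Proof.
move=> injB monB lF /set0Pn[e0 e0F].
pose v := Order.arg_max e0.2 (fun i => i \in tar F) B.
have [vT vmax] : v \in tar F /\ forall x, x \in tar F -> B x <= B v.
  by rewrite /v; case: arg_maxP => //; exact: imset_f.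
exists v; rewrite /removable vT; apply/forall_inP=> _ /imsetP[e eF ->].
apply/negP=> /and3P[_ not_adj not_eq].
have l_not_ev : l \notin G e.1 v.
  apply: contra not_adj => lv; apply/existsP; exists v.
  by rewrite /is_edge /= eqxx andbT; apply/set0Pn; exists l.
have ve : v != e.1 by rewrite eq_sym.
have ev : e.2 = v.
  by apply: injB; apply/eqP; rewrite eq_le vmax ?imset_f ?(monB _ _ _ (lF e eF)).
by move: l_not_ev; rewrite -ev lF.
Qed.

End Potential.

Section Removal.
Variables (n h : nat) (G : net n h).

Lemma removal_step_sub (F : {set 'I_n * 'I_n}) : removal_step G F \subset F.
Proof.
rewrite /removal_step; case: pickP => [v _|_] //.
by apply/subsetP=> e; rewrite inE => /andP[].
Qed.

(* A step strictly shrinks F as soon as some node is removable: the picked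
   node is the target of an edge of F, which gets removed. *)
Lemma removal_step_proper (F : {set 'I_n * 'I_n}) :
  (exists v, removable G F v) -> removal_step G F \proper F.
Proof.
move=> [v remv]; rewrite properEneq removal_step_sub andbT /removal_step.
case: pickP => [v' /andP[/imsetP[e eF ev'] _]|/(_ v)]; last by rewrite remv.
apply/eqP=> eqF.
by have := eF; rewrite -eqF inE ev' eqxx andbF.
Qed.

Lemma removal_iter_empty (k : nat) (F : {set 'I_n * 'I_n}) :
  (forall F' : {set 'I_n * 'I_n},
     F' \subset F -> F' != set0 -> exists v, removable G F' v) ->
  (#|F| <= k)%N -> iter k (removal_step G) F = set0.
Proof.
elim: k F => [|k IH] F remF leFk.
  by apply/eqP; rewrite -cards_eq0 -leqn0.
rewrite iterSr; have [->|nzF] := eqVneq F set0.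
  have step0 : removal_step G set0 = set0.
    by apply/eqP; rewrite -subset0 removal_step_sub.
  by rewrite step0; elim: k {IH leFk} => //= k ->.
have ltF := proper_card (removal_step_proper (remF F (subxx F) nzF)).
apply: IH; last by rewrite -ltnS (leq_trans ltF).
move=> F' sF' nzF'; apply: remF nzF'.
exact: subset_trans sF' (removal_step_sub F).
Qed.

End Removal.

Theorem theorem1 (R : realDomainType) (n h : nat) (G : net n h)
  (A : 'I_n -> 'I_h -> R) :
  no_self_loops G ->
  (forall i l, 0 <= A i l) ->
  (forall l, injective (fun i => A i l)) ->
  extremal A G ->
  forall E : {set 'I_n * 'I_n},
    E \subset edges G -> E != set0 -> Delta G E = 0%N ->
    ~ (exists l : 'I_h, forall e, e \in E -> l \in G e.1 e.2).
Proof.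
move=> _ _ injA ext E _ _ DeltaE [l lE].
have [B [injB monB]] := extremal_monotone_rank ext (injA l).
have deltaE : delta G E = set0.
  apply: removal_iter_empty => // F sFE.
  apply: top_target_removable injB monB _ => e eF.
  exact/lE/(subsetP sFE).
by move: DeltaE; rewrite /Delta deltaE eqxx.
Qed.
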